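(* Let $R=(\mathbb{Z}_I,\oplus,\otimes)$ be an $I$-based ring and $S=(\mathbb{Z}_L,\oplus,\otimes)$ an $L$-based ring which is a based subring of $R$. Let $N=(\mathbb{Z}_J,\oplus,\otimes)$ be a based $S$-module with basis $J$. If $S$ is divisible in $R$, then the induced $R$-module $\mathrm{Ind}^R_S(N)=R\odot_S N$ is a torsion $R$-module whenever $N$ is a torsion $S$-module.
   Context: For a set $X$, $\mathbb{Z}_X$ is the free $\mathbb{Z}$-module with basis $X$. Let $(I,\mathbbm{1})$ be an involutive pointed set (involution $\alpha\mapsto\overline{\alpha}$). A ring structure on $\mathbb{Z}_I$ is given by constants $N^i_{\alpha,i'}\in\mathbb{N}\cup\{0\}$ with $\alpha\otimes i'=\sum_i N^i_{\alpha,i'} i$ (finite sums); write $i\subset\alpha\otimes i'$ if $N^i_{\alpha,i'}\neq0$. It is $I$-based if $\overline{\alpha\otimes\alpha'}=\overline{\alpha'}\otimes\overline{\alpha}$ and $\mathbbm{1}\subset\overline{\alpha}\otimes\alpha'$ iff $\alpha=\alpha'$. A module structure of $\mathbb{Z}_I$ on $\mathbb{Z}_J$ is given by constants $N^j_{\alpha,j'}\ge0$ with $\alpha\otimes j'=\sum_j N^j_{\alpha,j'}j$; it is $J$-based if $j\subset\alpha\otimes j'\iff j'\subset\overline{\alpha}\otimes j$; co-finite if for all $j,j'$ the set $\{\alpha: j\subset\alpha\otimes j'\}$ is finite; connected if for all $j,j'$ there is $\alpha$ with $j\subset\alpha\otimes j'$; torsion if co-finite and connected. $S$ is a based subring of $R$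 if $L\subset I$ is closed under involution, contains $\mathbbm{1}$, and the products of elements of $L$ only involve elements of $L$. $S$ is divisible in $R$ if $R\cong\bigoplus_{\Omega}S$ as based $S$-modules (an $S$-module isomorphism sending basis elements to basis elements). $\mathrm{Ind}^R_S(N)=R\odot_S N$ is the algebraic tensor product with left $R$-action by multiplication on the first factor. *)

From HB Require Import structures.
From mathcomp Require Import all_boot all_order all_algebra.
From mathcomp Require Export freeg.

Set Implicit Arguments.
Unset Strict Implicit.
Unset Printing Implicit Defensive.

Import Order.TTheory GRing.Theory Num.Theory.
Local Open Scope ring_scope.

(* Z_X is represented by {freeg X / int}: the free Z-module with basis X.
   Structure constants: for a product/action we give the (finite) formal sum
   alpha (x) x' = \sum_x N^x_{alpha,x'} x  as an element of {freeg X / int};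
   N^x_{alpha,x'} = coeff x (act alpha x'), and "x \subset alpha (x) x'"
   means coeff x (act alpha x') != 0. Products/actions are extended
   Z-bilinearly with fglift. *)

Section BasedRings.
Variable I : choiceType.

Definition nonneg (X : choiceType) (D : {freeg X / int}) : Prop :=
  forall x, 0 <= coeff x D.

Definition involutive_pointed (one : I) (inv : I -> I) : Prop :=
  involutive inv /\ inv one = one.

Definition ring_structure (one : I) (mult : I -> I -> {freeg I / int}) : Prop :=
  [/\ forall a b, nonneg (mult a b),
      forall a b c, fglift (fun e => mult e c) (mult a b)
                    = fglift (mult a) (mult b c),
      forall a, mult one a = << a >> &
      forall a, mult a one = << a >> ].

Definition I_based (one : I) (inv : I -> I) (mult : I -> I -> {freeg I / int}) : Prop :=
  (forall a b i, coeff (inv i) (mult a b) = coeff i (mult (inv b) (inv a))) /\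
  (forall a a', coeff one (mult (inv a) a') != 0 <-> a = a').

Definition based_subring (one : I) (inv : I -> I) (mult : I -> I -> {freeg I / int})
  (Lp : pred I) : Prop :=
  [/\ forall l, Lp l -> Lp (inv l),
      Lp one &
      forall l l' i, Lp l -> Lp l' -> coeff i (mult l l') != 0 -> Lp i ].

Section Modules.
Variable X : choiceType.
(* A : the basis of the acting ring (predT for R, Lp for S) *)
Variables (A : pred I) (act : I -> X -> {freeg X / int}).

Definition module_structure (one : I) (mult : I -> I -> {freeg I / int}) : Prop :=
  [/\ forall a x, A a -> nonneg (act a x),
      forall a b x, A a -> A b ->
        fglift (fun e => act e x) (mult a b) = fglift (act a) (act b x) &
      forall x, act one x = << x >> ].

Definition based_module (inv : I -> I) : Prop :=
  forall a x x', A a -> (coeff x (act a x') != 0 <-> coeff x' (act (inv a) x) != 0).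

Definition cofinite : Prop :=
  forall x x', exists s : seq I, forall a, A a -> coeff x (act a x') != 0 -> a \in s.

Definition connected : Prop :=
  forall x x', exists a, A a /\ coeff x (act a x') != 0.

Definition torsion : Prop := cofinite /\ connected.
End Modules.

(* S (basis Lp) is divisible in R: R is isomorphic, as a based (left)
   S-module, to a direct sum of copies of S indexed by Om, via a bijection
   phi : Om x L -> I of bases which intertwines the S-actions. *)
Definition divisible (mult : I -> I -> {freeg I / int}) (Lp : pred I) : Prop :=
  exists (Om : eqType) (phi : Om * {x : I | Lp x} -> I),
    bijective phi /\
    forall (l : I) (w : Om) (l' : {x : I | Lp x}) (w2 : Om) (l2 : {x : I | Lp x}),
      Lp l ->
      coeff (phi (w2, l2)) (mult l (phi (w, l')))
      = if w2 == w then coeff (val l2) (mult l (val l')) else 0.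

(* The algebraic tensor product R (.)_S N = Z_{I x J} / K, where K is the
   Z-span of the balancing relations (i.l) (x) j - i (x) (l.j). *)
Section Induction.
Variable J : choiceType.
Variables (mult : I -> I -> {freeg I / int}) (Lp : pred I)
          (actN : I -> J -> {freeg J / int}).

Definition tens_rel (i l : I) (j : J) : {freeg (I * J) / int} :=
  fglift (fun i' => << (i', j) >>) (mult i l)
  - fglift (fun j' => << (i, j') >>) (actN l j).

Definition tens_kernel (D : {freeg (I * J) / int}) : Prop :=
  exists s : seq (int * I * I * J),
    all (fun t => Lp t.1.2) s /\
    D = \sum_(t <- s) t.1.1.1 *: tens_rel t.1.1.2 t.1.2 t.2.

Definition tens_eq (D1 D2 : {freeg (I * J) / int}) : Prop := tens_kernel (D1 - D2).

Definition ind_act (a : I) (p : I * J) : {freeg (I * J) / int} :=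
  fglift (fun i' => << (i', p.2) >>) (mult a p.1).

Definition embed (B : choiceType) (bas : B -> I * J) (E : {freeg B / int})
  : {freeg (I * J) / int} := fglift (fun t => << bas t >>) E.

(* the classes of the pure tensors bas t form a Z-basis of R (.)_S N *)
Definition tensor_basis (B : choiceType) (bas : B -> I * J) : Prop :=
  (forall D, exists E : {freeg B / int}, tens_eq D (embed bas E)) /\
  (forall E : {freeg B / int}, tens_eq (embed bas E) 0 -> E = 0).

Definition induced_is_torsion (one : I) : Prop :=
  exists (B : choiceType) (bas : B -> I * J) (actB : I -> B -> {freeg B / int}),
    [/\ tensor_basis bas,
        forall a t, tens_eq (ind_act a (bas t)) (embed bas (actB a t)),
        module_structure predT actB one mult &
        torsion predT actB ].
End Induction.
End BasedRings.

From HB Require Import structures.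
From mathcomp Require Import all_boot all_order all_algebra.
From mathcomp Require Import freeg.

(** Applying the involution, divisibility of [S] in [R] turns into a
    decomposition [R = (+)_w g_w S] of [R] as a free right [S]-module, with
    each [g_w] a basis element and [g_w I_S] a block of the basis [I].  Hence
    [R (x)_S N = (+)_w g_w (x) N] has the basis [{g_w (x) j}]: every pure tensor
    [i (x) j] equals its normal form [g_w(i) (x) l(i) j], and the normal-form
    map kills exactly the balancing relations.  The structure constants of
    [a (g_w (x) j)] are sums of products [N^k_{a,g_w} N^j'_{l(k),j}], hence
    nonnegative.  Co-finiteness comes from that of [N] and the reciprocity
    [N^k_{a,b} <> 0 -> N^{a^-1}_{b,k^-1} <> 0]; connectedness from that of [N]
    and the fact that every basis element occurs in some [a g_w]. *)

Set Implicit Arguments.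
Unset Strict Implicit.
Unset Printing Implicit Defensive.

Import Order.TTheory GRing.Theory Num.Theory.
Local Open Scope ring_scope.

HB.instance Definition _ (K : choiceType) (M : lmodType int) (f : K -> M) :=
  GRing.isZmodMorphism.Build {freeg K / int} M (fglift f) (lift_is_additive f).

Section FreegLift.
Implicit Types (X Y : choiceType).

Lemma fgliftE X (M : lmodType int) (f : X -> M) D :
  fglift f D = \sum_(z <- dom D) coeff z D *: f z.
Proof.
by rewrite -{1}(freeg_sumE D) raddf_sum; apply: eq_bigr => z _ /=; rewrite liftU.
Qed.

Lemma fglift1 X (M : lmodType int) (f : X -> M) z : fglift f << z >> = f z.
Proof. by rewrite liftU scale1r. Qed.

Lemma fgliftZ X (M : lmodType int) (f : X -> M) (c : int) D :
  fglift f (c *: D) = c *: fglift f D.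
Proof. by rewrite -[c in LHS]intz scaler_int raddfMz -scaler_int intz. Qed.

Lemma eq_in_fglift X (M : lmodType int) (f g : X -> M) D :
  {in dom D, f =1 g} -> fglift f D = fglift g D.
Proof. by move=> fg; rewrite !fgliftE !big_seq; apply: eq_bigr => z /fg ->. Qed.

Lemma eq_fglift X (M : lmodType int) (f g : X -> M) D :
  f =1 g -> fglift f D = fglift g D.
Proof. by move=> fg; apply: eq_in_fglift => z _. Qed.

Lemma fgliftB X (M : lmodType int) (f g : X -> M) D :
  fglift (fun x => f x - g x) D = fglift f D - fglift g D.
Proof. by rewrite !fgliftE -sumrB; apply: eq_bigr => z _; rewrite scalerBr. Qed.

Lemma fglift_comp X Y (M : lmodType int) (g : Y -> M) (f : X -> {freeg Y / int}) D :
  fglift g (fglift f D) = fglift (fun x => fglift g (f x)) D.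
Proof.
by rewrite (fgliftE f) [RHS]fgliftE raddf_sum; apply: eq_bigr => z _ /=; rewrite fgliftZ.
Qed.

Lemma fglift_swap X Y (M : lmodType int) (h : X -> Y -> M) D1 D2 :
  fglift (fun x => fglift (h x) D2) D1 = fglift (fun y => fglift (h^~ y) D1) D2.
Proof.
rewrite fgliftE [RHS]fgliftE.
under eq_bigr do rewrite fgliftE scaler_sumr.
under [RHS]eq_bigr do rewrite fgliftE scaler_sumr.
by rewrite exchange_big; do 2!apply: eq_bigr => ? _; rewrite !scalerA mulrC.
Qed.

Lemma coeff_fglift X Y (f : X -> {freeg Y / int}) D y :
  coeff y (fglift f D) = \sum_(z <- dom D) coeff z D * coeff y (f z).
Proof. by rewrite fgliftE raddf_sum; apply: eq_bigr => z _ /=; rewrite coeffZ. Qed.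

Lemma fglift_id X (D : {freeg X / int}) : fglift (fun z => << z >>) D = D.
Proof.
apply/eqP/freeg_eqP => x; rewrite coeff_fglift -[in RHS](freeg_sumE D) raddf_sum.
by apply: eq_bigr => z _ /=; rewrite !coeffU mul1r.
Qed.

Lemma coeff_fglift_in X Y (f : X -> Y) (P : pred X) (D : {freeg X / int}) x :
  {in P &, injective f} -> {subset dom D <= P} -> P x ->
  coeff (f x) (fglift (fun z => << f z >>) D) = coeff x D.
Proof.
move=> f_inj DP Px; rewrite coeff_fglift -[in RHS](fglift_id D) coeff_fglift.
rewrite !big_seq; apply: eq_bigr => z /DP Pz.
by rewrite !coeffU !mul1r (inj_in_eq f_inj).
Qed.

Lemma coeff_fglift_out X Y (f : X -> Y) (D : {freeg X / int}) y :
  {in dom D, forall z, f z != y} -> coeff y (fglift (fun z => << f z >>) D) = 0.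
Proof.
move=> fy; rewrite coeff_fglift big_seq big1 // => z /fy.
by rewrite coeffU mul1r => /negbTE ->; rewrite mulr0.
Qed.

Lemma coeff_fglift_pair X Y (c : X) (D : {freeg Y / int}) c' y :
  coeff (c', y) (fglift (fun y' => << (c, y') >>) D) = (c == c')%:R * coeff y D.
Proof.
have [<-|ne] := eqVneq c c'; last first.
  by rewrite mul0r coeff_fglift_out // => z _; apply: contra_neq ne => -[].
by rewrite mul1r (coeff_fglift_in (P := predT)) // => ? ? _ _ [].
Qed.

Lemma coeff_fglift_neq0 X Y (f : X -> {freeg Y / int}) D y :
  coeff y (fglift f D) != 0 -> exists2 x, coeff x D != 0 & coeff y (f x) != 0.
Proof.
rewrite coeff_fglift => nz.
have /hasP[x _] : has (fun x => coeff x D * coeff y (f x) != 0) (dom D).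
  apply: contraNT nz; rewrite -all_predC => /allP nz.
  by rewrite big_seq big1 // => x /nz /negPn /eqP.
by rewrite mulf_eq0 negb_or => /andP[]; exists x.
Qed.

Lemma nonnegU X (z : X) : nonneg << z >>.
Proof. by move=> x; rewrite coeffU mul1r ler0n. Qed.

Lemma nonneg_fglift X Y (f : X -> {freeg Y / int}) D :
  nonneg D -> (forall z, nonneg (f z)) -> nonneg (fglift f D).
Proof.
move=> D0 f0 y; rewrite coeff_fglift; apply: sumr_ge0 => z _.
by apply: mulr_ge0; [apply: D0 | apply: f0].
Qed.

Lemma coeff_fglift_gt0 X Y (f : X -> {freeg Y / int}) D x y :
  nonneg D -> (forall z, nonneg (f z)) ->
  0 < coeff x D -> 0 < coeff y (f x) -> 0 < coeff y (fglift f D).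
Proof.
move=> D0 f0 Dx fx; rewrite lt0r nonneg_fglift // andbT coeff_fglift.
rewrite psumr_neq0 => [|z _]; last by apply: mulr_ge0; [apply: D0 | apply: f0].
by apply/hasP; exists x; rewrite ?mem_dom ?gt_eqF ?mulr_gt0.
Qed.

End FreegLift.

Section TensorKernel.
Variables (I J : choiceType) (mult : I -> I -> {freeg I / int}) (Lp : pred I)
  (actN : I -> J -> {freeg J / int}).
Local Notation tens_kernel := (tens_kernel mult Lp actN).
Local Notation tens_rel := (tens_rel mult actN).

Lemma tens_kernel0 : tens_kernel 0.
Proof. by exists [::]; rewrite big_nil. Qed.

Lemma tens_kernelD D1 D2 : tens_kernel D1 -> tens_kernel D2 -> tens_kernel (D1 + D2).
Proof.
move=> [s1 [h1 ->]] [s2 [h2 ->]]; exists (s1 ++ s2).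
by rewrite all_cat h1 h2 big_cat.
Qed.

Lemma tens_kernelZ c D : tens_kernel D -> tens_kernel (c *: D).
Proof.
move=> [s [h ->]]; exists [seq (c * t.1.1.1, t.1.1.2, t.1.2, t.2) | t <- s].
rewrite all_map big_map scaler_sumr; split=> //.
by apply: eq_bigr => t _; rewrite scalerA.
Qed.

Lemma tens_kernel_rel i l j : Lp l -> tens_kernel (tens_rel i l j).
Proof. by move=> hl; exists [:: (1, i, l, j)]; rewrite /= hl big_seq1 scale1r. Qed.

Lemma tens_kernel_fglift (X : choiceType) (h : X -> {freeg (I * J) / int}) D :
  (forall z, tens_kernel (h z)) -> tens_kernel (fglift h D).
Proof.
move=> hh; rewrite fgliftE; elim: (dom D) => [|z s IH].
  by rewrite big_nil; apply: tens_kernel0.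
by rewrite big_cons; apply: tens_kernelD => //; apply: tens_kernelZ.
Qed.

Hypothesis mult_assoc : forall a b c,
  fglift (fun e => mult e c) (mult a b) = fglift (mult a) (mult b c).

Lemma ind_act_tens_rel a i l j :
  fglift (ind_act mult a) (tens_rel i l j)
  = fglift (fun k => tens_rel k l j) (mult a i).
Proof.
rewrite /tens_rel raddfB /= fgliftB !fglift_comp /ind_act.
congr (_ - _); under eq_fglift do rewrite fglift1 /=.
  by rewrite -fglift_comp -mult_assoc fglift_comp.
exact: fglift_swap.
Qed.

Lemma ind_act_assoc a b (p : I * J) :
  fglift (fun e => ind_act mult e p) (mult a b)
  = fglift (ind_act mult a) (ind_act mult b p).
Proof.
rewrite /ind_act -fglift_comp mult_assoc !fglift_comp.
by apply: eq_fglift => k; rewrite fglift1.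
Qed.

Lemma tens_kernel_ind_act a D :
  tens_kernel D -> tens_kernel (fglift (ind_act mult a) D).
Proof.
move=> [s [sL ->]]; rewrite raddf_sum; elim: s sL => [|t s IH] /=.
  by rewrite big_nil => _; apply: tens_kernel0.
move=> /andP[tL sL]; rewrite big_cons; apply: tens_kernelD (IH sL).
rewrite /= fgliftZ ind_act_tens_rel; apply/tens_kernelZ/tens_kernel_fglift => k.
exact: tens_kernel_rel.
Qed.

End TensorKernel.

Section BasedRing.
Variables (I : choiceType) (one : I) (inv : I -> I) (mult : I -> I -> {freeg I / int}).
Hypothesis invK : involutive inv.
Hypothesis mult_nonneg : forall a b, nonneg (mult a b).
Hypothesis mult_assoc : forall a b c,
  fglift (fun e => mult e c) (mult a b) = fglift (mult a) (mult b c).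
Hypothesis mult_one : forall a, mult a one = << a >>.
Hypothesis coeff1_mult : forall a a', coeff one (mult (inv a) a') != 0 <-> a = a'.

Lemma coeff_mult_gt0 a b c : (0 < coeff c (mult a b)) = (coeff c (mult a b) != 0).
Proof. by rewrite lt0r mult_nonneg andbT. Qed.

Lemma coeff1_multV a : 0 < coeff one (mult (inv a) a).
Proof. by rewrite coeff_mult_gt0; apply/coeff1_mult. Qed.

(* [one] occurs in [(a b) c^-1 = a (b c^-1)], and it occurs in [a e] only
   for [e = a^-1]. *)
Lemma coeff_mult_rot a b c :
  coeff c (mult a b) != 0 -> coeff (inv a) (mult b (inv c)) != 0.
Proof.
move=> cab; have : 0 < coeff one (fglift (fun e => mult e (inv c)) (mult a b)).
  apply: (coeff_fglift_gt0 (x := c)) => //; first by rewrite coeff_mult_gt0.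
  by rewrite -{1}[c]invK coeff1_multV.
rewrite mult_assoc => /lt0r_neq0 /coeff_fglift_neq0[e eN0].
by rewrite -{1}[a]invK => /coeff1_mult ->.
Qed.

(* [a] occurs in [a (b^-1 b) = (a b^-1) b]. *)
Lemma regular_connected : connected predT mult.
Proof.
move=> a b; have : 0 < coeff a (fglift (mult a) (mult (inv b) b)).
  apply: (coeff_fglift_gt0 (x := one)) => //; first exact: coeff1_multV.
  by rewrite mult_one coeffU eqxx.
by rewrite -mult_assoc => /lt0r_neq0 /coeff_fglift_neq0[c _ acb]; exists c.
Qed.

End BasedRing.

Section RightCoordinates.
Variables (I : choiceType) (one : I) (inv : I -> I)
  (mult : I -> I -> {freeg I / int}) (Lp : pred I).

(* [i |-> (wof i, lof i)] identifies [I] with [Om * L], with inverse [mk];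
   the last condition says that [R = (+)_Om S] as right [S]-modules. *)
Definition free_right_coordinates (Om : eqType) (wof : I -> Om) (lof : I -> I)
    (mk : Om -> I -> I) : Prop :=
  [/\ forall i, Lp (lof i),
      forall w l, Lp l -> wof (mk w l) = w,
      forall w l, Lp l -> lof (mk w l) = l,
      forall i, mk (wof i) (lof i) = i &
      forall i k l, Lp l -> coeff k (mult i l)
        = if wof k == wof i then coeff (lof k) (mult (lof i) l) else 0].

Hypothesis invK : involutive inv.
Hypothesis coeff_inv : forall a b i,
  coeff (inv i) (mult a b) = coeff i (mult (inv b) (inv a)).
Hypothesis Lp_inv : forall l, Lp l -> Lp (inv l).
Hypothesis Lp1 : Lp one.

(* The involution turns the left decomposition [phi] into a right one. *)
Lemma divisible_right_coordinates : divisible mult Lp ->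
  exists (Om : eqType) wof lof mk, @free_right_coordinates Om wof lof mk.
Proof.
move=> [Om [phi [[psi phiK psiK] phi_mult]]].
pose one' : {x : I | Lp x} := exist _ one Lp1.
exists Om, (fun i => (psi (inv i)).1), (fun i => inv (val (psi (inv i)).2)).
exists (fun w l => inv (phi (w, insubd one' (inv l)))); split.
- by move=> i; apply/Lp_inv/valP.
- by move=> w l _; rewrite invK phiK.
- by move=> w l /Lp_inv Ll; rewrite invK phiK insubdK ?invK.
- by move=> i; rewrite invK valKd -surjective_pairing psiK invK.
move=> i k l Ll; rewrite -[k]invK -[i]invK coeff_inv invK.
case: (psi (inv k)) (psiK (inv k)) => wk lk <- /=.
case: (psi (inv i)) (psiK (inv i)) => wi li <- /=.
rewrite !invK phiK /= phi_mult ?Lp_inv //.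
by case: (wk == wi) => //; rewrite coeff_inv !invK.
Qed.

End RightCoordinates.

Section InducedModule.
Variables (I J : choiceType) (one : I) (inv : I -> I)
  (mult : I -> I -> {freeg I / int}) (Lp : pred I)
  (actN : I -> J -> {freeg J / int}).
Hypothesis invK : involutive inv.
Hypothesis mult_nonneg : forall a b, nonneg (mult a b).
Hypothesis mult_assoc : forall a b c,
  fglift (fun e => mult e c) (mult a b) = fglift (mult a) (mult b c).
Hypothesis one_mult : forall a, mult one a = << a >>.
Hypothesis mult_one : forall a, mult a one = << a >>.
Hypothesis coeff1_mult : forall a a', coeff one (mult (inv a) a') != 0 <-> a = a'.
Hypothesis Lp1 : Lp one.
Hypothesis Lp_mult : forall l l' i, Lp l -> Lp l' -> coeff i (mult l l') != 0 -> Lp i.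
Hypothesis actN_nonneg : forall a x, Lp a -> nonneg (actN a x).
Hypothesis actN_assoc : forall a b x, Lp a -> Lp b ->
  fglift (fun e => actN e x) (mult a b) = fglift (actN a) (actN b x).
Hypothesis one_actN : forall x, actN one x = << x >>.
Hypothesis N_cofinite : cofinite Lp actN.
Hypothesis N_connected : connected Lp actN.

Variables (Om : eqType) (wof : I -> Om) (lof : I -> I) (mk : Om -> I -> I).
Hypothesis Lp_lof : forall i, Lp (lof i).
Hypothesis wof_mk : forall w l, Lp l -> wof (mk w l) = w.
Hypothesis lof_mk : forall w l, Lp l -> lof (mk w l) = l.
Hypothesis mk_coord : forall i, mk (wof i) (lof i) = i.
Hypothesis coeff_mult_coord : forall i k l, Lp l ->
  coeff k (mult i l) = if wof k == wof i then coeff (lof k) (mult (lof i) l) else 0.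

Local Notation tens_kernel := (tens_kernel mult Lp actN).
Local Notation tens_rel := (tens_rel mult actN).

Lemma mult_coord i l : Lp l ->
  mult i l = fglift (fun m => << mk (wof i) m >>) (mult (lof i) l).
Proof.
move=> Ll; have domL m : m \in dom (mult (lof i) l) -> Lp m.
  by rewrite mem_dom; apply: Lp_mult.
apply/eqP/freeg_eqP => k; rewrite coeff_mult_coord //.
case: eqP => [<- | wk].
  rewrite -{2}[k]mk_coord (coeff_fglift_in (P := Lp)) //.
  by move=> m m' Lm Lm' /(congr1 lof); rewrite !lof_mk.
rewrite coeff_fglift_out // => m /domL Lm.
by apply/eqP => mk_k; apply: wk; rewrite -mk_k wof_mk.
Qed.

(* [gen i] generates the block of [i]: [i = gen i * lof i]. *)
Definition gen i := mk (wof i) one.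

Lemma mult_gen i l : Lp l -> mult (gen i) l = << mk (wof i) l >>.
Proof. by move=> Ll; rewrite mult_coord // wof_mk // lof_mk // one_mult fglift1. Qed.

Lemma gen_idem i : gen (gen i) == gen i.
Proof. by rewrite /gen wof_mk. Qed.

Definition Gen := {i : I | gen i == i}.
Definition genG i : Gen := exist _ (gen i) (gen_idem i).

Lemma genG_val (g : Gen) : genG (val g) = g.
Proof. by apply: val_inj; apply/eqP/(valP g). Qed.

Lemma genG_mk i m : Lp m -> genG (mk (wof i) m) = genG i.
Proof. by move=> Lm; apply: val_inj; rewrite /= /gen wof_mk. Qed.

Definition bas (t : Gen * J) : I * J := (val t.1, t.2).

(* Normal form of the pure tensor [i (x) j = gen i (x) (lof i) j]. *)
Definition nf_pure (p : I * J) : {freeg (Gen * J) / int} :=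
  fglift (fun j => << (genG p.1, j) >>) (actN (lof p.1) p.2).

Definition nf := fglift nf_pure.

Lemma nf_bas t : nf_pure (bas t) = << t >>.
Proof.
case: t => g j; have lof_g : lof (val g) = one by rewrite -(eqP (valP g)) lof_mk.
by rewrite /nf_pure /= lof_g one_actN fglift1 genG_val.
Qed.

Lemma nf_embed D : nf (embed bas D) = D.
Proof.
rewrite /embed /nf fglift_comp -[RHS]fglift_id; apply: eq_fglift => t.
by rewrite fglift1 nf_bas.
Qed.

Lemma nf_tens_rel i l j : Lp l -> nf (tens_rel i l j) = 0.
Proof.
move=> Ll; apply/eqP; rewrite /tens_rel /nf raddfB subr_eq0 /= !fglift_comp.
rewrite mult_coord // fglift_comp; apply/eqP.
under eq_fglift do rewrite !fglift1.
under [RHS]eq_fglift do rewrite !fglift1.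
rewrite (eq_in_fglift (g := fun m => fglift (fun j' => << (genG i, j') >>) (actN m j))).
  by rewrite -fglift_comp actN_assoc // fglift_comp.
move=> m; rewrite mem_dom => /(Lp_mult (Lp_lof i) Ll) Lm.
by rewrite /nf_pure /= genG_mk // lof_mk.
Qed.

Lemma nf_kernel D : tens_kernel D -> nf D = 0.
Proof.
move=> [s [sL ->]]; rewrite /nf raddf_sum big_seq big1 // => t ts /=.
by rewrite fgliftZ -/nf nf_tens_rel ?scaler0 //; apply: (allP sL).
Qed.

Lemma pure_sub_nf i j :
  << (i, j) >> - embed bas (nf_pure (i, j)) = tens_rel (gen i) (lof i) j.
Proof.
rewrite /tens_rel mult_gen // mk_coord fglift1 /embed fglift_comp /=.
by congr (_ - _); apply: eq_fglift => j' /=; rewrite fglift1.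
Qed.

Lemma tens_kernel_sub_nf D : tens_kernel (D - embed bas (nf D)).
Proof.
have -> : D - embed bas (nf D) = fglift (fun p => << p >> - embed bas (nf_pure p)) D.
  by rewrite fgliftB fglift_id /embed /nf fglift_comp.
by apply: tens_kernel_fglift => -[i j]; rewrite pure_sub_nf; apply: tens_kernel_rel.
Qed.

Lemma tensor_basis_bas : tensor_basis mult Lp actN bas.
Proof.
split=> D; first by exists (nf D); apply: tens_kernel_sub_nf.
by rewrite /tens_eq subr0 => /nf_kernel; rewrite nf_embed.
Qed.

Lemma nf_ind_act_nf a D :
  nf (fglift (ind_act mult a) (embed bas (nf D))) = nf (fglift (ind_act mult a) D).
Proof.
apply/eqP; rewrite eq_sym -subr_eq0 /nf -!raddfB /=; apply/eqP/nf_kernel.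
exact/(tens_kernel_ind_act mult_assoc)/tens_kernel_sub_nf.
Qed.

Definition actB a t := nf (ind_act mult a (bas t)).

Lemma actBE a t : actB a t = fglift (fun k => nf_pure (k, t.2)) (mult a (val t.1)).
Proof.
by rewrite /actB /nf /ind_act fglift_comp; apply: eq_fglift => k; rewrite fglift1.
Qed.

Lemma nf_pure_nonneg p : Lp (lof p.1) -> nonneg (nf_pure p).
Proof.
by move=> L; apply: nonneg_fglift => [|?]; [apply: actN_nonneg | apply: nonnegU].
Qed.

Lemma actB_nonneg a t : nonneg (actB a t).
Proof. by rewrite actBE; apply: nonneg_fglift => // k; apply: nf_pure_nonneg. Qed.

Lemma actB1 t : actB one t = << t >>.
Proof. by case: t => g j; rewrite actBE one_mult fglift1 nf_bas. Qed.

Lemma actB_assoc a b t :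
  fglift (fun e => actB e t) (mult a b) = fglift (actB a) (actB b t).
Proof.
rewrite /actB -fglift_comp (ind_act_assoc mult_assoc) -/nf -(nf_ind_act_nf a).
rewrite /embed [in LHS]fglift_comp /nf [LHS]fglift_comp.
by under eq_fglift do rewrite fglift1.
Qed.

Lemma coeff_nf_pure k j g j' :
  coeff (g, j') (nf_pure (k, j)) = (genG k == g)%:R * coeff j' (actN (lof k) j).
Proof. exact: coeff_fglift_pair. Qed.

(* If [(g', j')] occurs in [a (g, j)] then some [k = mk (wof g') l] occurs in
   [a g], with [l] in the finite set given by co-finiteness of [N]; then [a^-1]
   occurs in [g k^-1]. *)
Lemma actB_cofinite : cofinite predT actB.
Proof.
move=> [g' j'] [g j]; have [s sN] := N_cofinite j' j.
exists (flatten [seq map inv (dom (mult (val g) (inv (mk (wof (val g')) l)))) | l <- s]).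
move=> a _; rewrite actBE => /coeff_fglift_neq0[k ka].
rewrite coeff_nf_pure mulf_eq0 negb_or pnatr_eq0 eqb0 negbK => /andP[/eqP kg kj].
have k_mk : mk (wof (val g')) (lof k) = k by rewrite -kg /= /gen wof_mk ?mk_coord.
apply/flatten_mapP; exists (lof k); first exact: sN.
rewrite -[a]invK map_f // mem_dom k_mk.
exact: (coeff_mult_rot invK mult_nonneg mult_assoc coeff1_mult).
Qed.

Lemma actB_connected : connected predT actB.
Proof.
move=> [g' j'] [g j]; have [l [Ll lj]] := N_connected j' j.
pose k := mk (wof (val g')) l.
have [a [_ ka]] :=
  regular_connected mult_nonneg mult_assoc mult_one coeff1_mult k (val g).
exists a; split=> //; rewrite actBE.
apply/lt0r_neq0/(coeff_fglift_gt0 (x := k)) => //.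
- by move=> k'; apply: nf_pure_nonneg.
- by rewrite (coeff_mult_gt0 mult_nonneg).
by rewrite coeff_nf_pure genG_mk // genG_val eqxx mul1r lof_mk // lt0r lj actN_nonneg.
Qed.

Lemma induced_torsion : induced_is_torsion mult Lp actN one.
Proof.
exists (Gen * J)%type, bas, actB; split.
- exact: tensor_basis_bas.
- move=> a t; exact: tens_kernel_sub_nf.
- split=> [a t _ | a b t _ _ |]; [exact: actB_nonneg | exact: actB_assoc | exact: actB1].
- split; [exact: actB_cofinite | exact: actB_connected].
Qed.

End InducedModule.

Unset Implicit Arguments.

Theorem lemma3p1 (I J : choiceType) (one : I) (inv : I -> I)
  (mult : I -> I -> {freeg I / int}) (Lp : pred I)
  (actN : I -> J -> {freeg J / int}) :
  involutive_pointed one inv ->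
  ring_structure one mult -> I_based one inv mult ->
  based_subring one inv mult Lp ->
  module_structure Lp actN one mult -> based_module Lp actN inv ->
  divisible mult Lp ->
  torsion Lp actN ->
  induced_is_torsion mult Lp actN one.
Proof.
(* [N] need not be based: only [R] gets transposed by the involution. *)
move=> [invK _] [mult_nonneg mult_assoc one_mult mult_one] [coeff_inv coeff1_mult]
  [Lp_inv Lp1 Lp_mult] [actN_nonneg actN_assoc one_actN] _ divR [N_cof N_con].
have [Om [wof [lof [mk [Lp_lof wof_mk lof_mk mk_coord coeff_mult_coord]]]]] :=
  divisible_right_coordinates invK coeff_inv Lp_inv Lp1 divR.
exact: (induced_torsion invK mult_nonneg mult_assoc one_mult mult_one coeff1_mult
  Lp1 Lp_mult actN_nonneg actN_assoc one_actN N_cof N_con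
  Lp_lof wof_mk lof_mk mk_coord coeff_mult_coord).
Qed.
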